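(* For all $P,Q\in\Gamma_n$, $$0\le M_{SG}(P\|Q)\le 2\,h(P\|Q)\qquad\text{and}\qquad 0\le \xi_{SG}(P\|Q)\le 2\,\xi_{h}(P\|Q).$$
   Context: $\Gamma_n=\{P=(p_1,\dots,p_n): p_i>0,\ \sum_i p_i=1\}$, $n\ge2$. For $f:(0,\infty)\to\mathbb{R}$, $C_f(P\|Q)=\sum_{i=1}^n q_i f(p_i/q_i)$; for differentiable $f$, $E_f(P\|Q)=\sum_{i=1}^n (p_i-q_i) f'(p_i/q_i)$ and $\xi_f=E_f-C_f$. With $f_{SG}(x)=\sqrt{(x^2+1)/2}-\sqrt x$ and $f_h(x)=\frac12(\sqrt x-1)^2$: $M_{SG}=C_{f_{SG}}=\sum_i\big(\sqrt{(p_i^2+q_i^2)/2}-\sqrt{p_iq_i}\big)$, $h=C_{f_h}=\frac12\sum_i(\sqrt{p_i}-\sqrt{q_i})^2$, $\xi_{SG}=\xi_{f_{SG}}$, $\xi_h=\xi_{f_h}$. *)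

From mathcomp Require Import all_boot all_order all_algebra.
From mathcomp Require Import all_classical all_reals all_analysis.
Set Implicit Arguments. Unset Strict Implicit. Unset Printing Implicit Defensive.
Import Order.TTheory GRing.Theory Num.Theory.
Local Open Scope ring_scope.

Definition Gamma (R : realType) (n : nat) (P : 'I_n -> R) : Prop :=
  (forall i, 0 < P i) /\ \sum_(i < n) P i = 1.

Definition Cf (R : realType) (n : nat) (f : R -> R) (P Q : 'I_n -> R) : R :=
  \sum_(i < n) Q i * f (P i / Q i).

Definition Ef (R : realType) (n : nat) (f : R -> R) (P Q : 'I_n -> R) : R :=
  \sum_(i < n) (P i - Q i) * derive1 f (P i / Q i).

Definition xi (R : realType) (n : nat) (f : R -> R) (P Q : 'I_n -> R) : R :=
  Ef f P Q - Cf f P Q.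

Definition f_SG (R : realType) (x : R) : R :=
  Num.sqrt ((x ^+ 2 + 1) / 2) - Num.sqrt x.

Definition f_h (R : realType) (x : R) : R :=
  (Num.sqrt x - 1) ^+ 2 / 2.

Definition M_SG (R : realType) (n : nat) (P Q : 'I_n -> R) : R := Cf (@f_SG R) P Q.
Definition hdiv (R : realType) (n : nat) (P Q : 'I_n -> R) : R := Cf (@f_h R) P Q.
Definition xi_SG (R : realType) (n : nat) (P Q : 'I_n -> R) : R := xi (@f_SG R) P Q.
Definition xi_h (R : realType) (n : nat) (P Q : 'I_n -> R) : R := xi (@f_h R) P Q.

(** Both divergences are Csiszár sums [sum_i q_i g (p_i / q_i)], and so is [xi_f],
    with generator [g x = (x - 1) f'(x) - f(x)]; it therefore suffices to compare
    generators pointwise on [(0, +oo)].  Writing [t = sqrt x] and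
    [S = sqrt ((x^2 + 1) / 2)], so that [2 S^2 = t^4 + 1], the four generators are
    [S - t], [(t - 1)^2 / 2], [(t^2 + 1)(S - t) / (2 t S)] and [(t - 1)^2 / (2 t)],
    and everything follows from the elementary bounds
    [t <= S <= t^2 - t + 1] and [t^2 + 1 <= 2 S]. *)

From mathcomp Require Import all_boot all_order all_algebra.
From mathcomp Require Import all_classical all_reals all_analysis.
From mathcomp Require Import ring lra.
Import Order.TTheory GRing.Theory Num.Theory.
Local Open Scope ring_scope.

Definition xi_generator {R : realType} (f : R -> R) (x : R) : R :=
  (x - 1) * derive1 f x - f x.

Section CsiszarSums.
Variables (R : realType) (n : nat) (P Q : 'I_n -> R).
Hypotheses (P_gt0 : forall i, 0 < P i) (Q_gt0 : forall i, 0 < Q i).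

Lemma xiE (f : R -> R) : xi f P Q = Cf (xi_generator f) P Q.
Proof.
rewrite /xi /Ef /Cf -sumrB; apply: eq_bigr => i _.
have Qi_neq0 : Q i != 0 by rewrite gt_eqF.
by rewrite /xi_generator mulrBr mulrA mulrBr mulr1 mulrCA divff // mulr1.
Qed.

Lemma Cf_ge0 (f : R -> R) : (forall x, 0 < x -> 0 <= f x) -> 0 <= Cf f P Q.
Proof.
move=> f_ge0; apply: sumr_ge0 => i _.
by rewrite mulr_ge0 ?f_ge0 ?divr_gt0 // ltW.
Qed.

Lemma ler_Cf (c : R) (f g : R -> R) :
  (forall x, 0 < x -> f x <= c * g x) -> Cf f P Q <= c * Cf g P Q.
Proof.
move=> le_fg; rewrite /Cf mulr_sumr; apply: ler_sum => i _.
by rewrite mulrCA ler_wpM2l ?le_fg ?divr_gt0 // ltW.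
Qed.

End CsiszarSums.

Lemma derive1_f_SG (R : realType) (x : R) : 0 < x ->
  derive1 (@f_SG R) x = x / (2 * Num.sqrt ((x ^+ 2 + 1) / 2)) - (2 * Num.sqrt x)^-1.
Proof.
move=> x_gt0; set g := fun y : R => (y ^+ 2 + 1) / 2.
have g_gt0 : 0 < g x by rewrite /g divr_gt0 // ltr_wpDl ?sqr_ge0.
have dg : is_derive x 1 g x.
  have -> : g = 2^-1 *: ((@idfun R) ^+ 2 + cst 1).
    by apply/funext => y /=; rewrite /g /GRing.scale /= mulrC.
  apply: is_derive_eq.
  by rewrite /GRing.scale /= expr1 mulr1 addr0 mulrA mulVf ?mul1r.
have dsqrt_g := is_derive1_comp (is_derive1_sqrt g_gt0) dg.
have -> : @f_SG R = (Num.sqrt \o g) - Num.sqrt by apply/funext.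
rewrite derive1E; case: (is_deriveB dsqrt_g (is_derive1_sqrt x_gt0)) => _ ->.
by rewrite mulrC.
Qed.

Lemma derive1_f_h (R : realType) (x : R) : 0 < x ->
  derive1 (@f_h R) x = (Num.sqrt x - 1) / (2 * Num.sqrt x).
Proof.
move=> x_gt0.
have -> : @f_h R = (Num.sqrt - cst 1) ^+ 2 * cst (2^-1) by apply/funext.
have dsqrt := is_derive1_sqrt x_gt0.
have dsqrt1 : is_derive x 1 (Num.sqrt - cst 1) ((2 * Num.sqrt x)^-1).
  by apply: is_derive_eq; rewrite subr0.
rewrite derive1E.
case: (is_deriveM (is_deriveX 2 dsqrt1) (is_derive_cst (2^-1 : R) x 1)) => _ ->.
by rewrite /GRing.scale /= mulr0 add0r expr1 !mulrA mulVf ?mul1r.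
Qed.

Section PointwiseBounds.
Variables (R : realType) (x : R).
Hypothesis x_gt0 : 0 < x.

Let t := Num.sqrt x.
Let S := Num.sqrt ((x ^+ 2 + 1) / 2).

Let t_gt0 : 0 < t. Proof. by rewrite sqrtr_gt0. Qed.
Let S_gt0 : 0 < S. Proof. by rewrite sqrtr_gt0 divr_gt0 // ltr_wpDl ?sqr_ge0. Qed.
Let x_sqr : x = t ^+ 2. Proof. by rewrite sqr_sqrtr ?ltW. Qed.
Let S_sqr : S ^+ 2 = (t ^+ 4 + 1) / 2.
Proof.
rewrite sqr_sqrtr; last by rewrite divr_ge0 // addr_ge0 ?sqr_ge0.
by rewrite [in RHS](_ : 4 = 2 * 2)%N // exprM -x_sqr.
Qed.

Lemma quadratic_mean_sqrt_bounds :
  [/\ t <= S, S <= t ^+ 2 - t + 1 & t ^+ 2 + 1 <= 2 * S].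
Proof.
have [tp Sp] := (t_gt0, S_gt0).
have sq1 := sqr_ge0 (t ^+ 2 - 1); have sq2 := sqr_ge0 ((t - 1) ^+ 2).
split; rewrite leNgt; apply/negP => lt_S.
- have lt_sqr : S ^+ 2 < t ^+ 2 by nra.
  by move: lt_sqr; rewrite S_sqr => ?; nra.
- have u_gt0 : 0 < t ^+ 2 - t + 1 by have := sqr_ge0 (t - 1); nra.
  have lt_sqr : (t ^+ 2 - t + 1) ^+ 2 < S ^+ 2 by nra.
  by move: lt_sqr; rewrite S_sqr => ?; nra.
- have lt_sqr : (2 * S) ^+ 2 < (t ^+ 2 + 1) ^+ 2 by nra.
  by move: lt_sqr; rewrite exprMn S_sqr => ?; nra.
Qed.

Lemma xi_generator_f_SG_sqrtE :
  xi_generator (@f_SG R) x = (t ^+ 2 + 1) * (S - t) / (2 * t * S).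
Proof.
have [t_neq0 S_neq0] : t != 0 /\ S != 0 by rewrite !gt_eqF.
rewrite /xi_generator derive1_f_SG // /f_SG -/t -/S x_sqr.
apply/eqP; rewrite -subr_eq0.
have -> : (t ^+ 2 - 1) * (t ^+ 2 / (2 * S) - (2 * t)^-1) - (S - t)
          - (t ^+ 2 + 1) * (S - t) / (2 * t * S)
          = (t ^+ 4 + 1 - 2 * S ^+ 2) / (2 * S).
  by field; rewrite S_neq0 t_neq0.
by rewrite S_sqr [2 * _]mulrC divfK ?subrr ?mul0r.
Qed.

Lemma xi_generator_f_h_sqrtE :
  xi_generator (@f_h R) x = (t - 1) ^+ 2 / (2 * t).
Proof.
have t_neq0 : t != 0 by rewrite gt_eqF.
rewrite /xi_generator derive1_f_h // /f_h -/t x_sqr.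
by field.
Qed.

Lemma f_SG_bounds : 0 <= f_SG x <= 2 * f_h x.
Proof.
have [le_tS le_S _] := quadratic_mean_sqrt_bounds.
rewrite /f_SG /f_h -/t -/S subr_ge0 le_tS /=.
by rewrite mulrC divfK //; lra.
Qed.

Lemma xi_generator_f_SG_bounds :
  0 <= xi_generator (@f_SG R) x <= 2 * xi_generator (@f_h R) x.
Proof.
have [le_tS le_S le_2S] := quadratic_mean_sqrt_bounds.
have tS_gt0 : 0 < 2 * t * S by rewrite !mulr_gt0.
rewrite xi_generator_f_SG_sqrtE xi_generator_f_h_sqrtE.
rewrite divr_ge0 ?mulr_ge0 ?subr_ge0 ?addr_ge0 ?sqr_ge0 ?(ltW t_gt0) ?(ltW S_gt0) //=.
have -> : 2 * ((t - 1) ^+ 2 / (2 * t)) = 2 * S * (t - 1) ^+ 2 / (2 * t * S).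
  by field; rewrite !gt_eqF.
rewrite ler_pM2r ?invr_gt0 // -subr_ge0.
have -> : 2 * S * (t - 1) ^+ 2 - (t ^+ 2 + 1) * (S - t) =
  (t - 1) ^+ 2 * (2 * S - (t ^+ 2 + 1)) + (t ^+ 2 + 1) * ((t - 1) ^+ 2 - (S - t))
  by ring.
apply: addr_ge0; apply: mulr_ge0.
- exact: sqr_ge0.
- by rewrite subr_ge0.
- by rewrite addr_ge0 ?sqr_ge0.
- by rewrite subr_ge0; nra.
Qed.

End PointwiseBounds.

Theorem proposition5p4 (R : realType) (n : nat) (P Q : 'I_n -> R) :
  (2 <= n)%N -> Gamma P -> Gamma Q ->
  (0 <= M_SG P Q /\ M_SG P Q <= 2 * hdiv P Q) /\
  (0 <= xi_SG P Q /\ xi_SG P Q <= 2 * xi_h P Q).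
Proof.
move=> _ [P_gt0 _] [Q_gt0 _].
rewrite /M_SG /hdiv /xi_SG /xi_h !xiE //.
split; split.
- by apply: Cf_ge0 => // x /f_SG_bounds /andP[].
- by apply: ler_Cf => // x /f_SG_bounds /andP[].
- by apply: Cf_ge0 => // x /xi_generator_f_SG_bounds /andP[].
- by apply: ler_Cf => // x /xi_generator_f_SG_bounds /andP[].
Qed.
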